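(* For every integer $n\ge 2$, the $n$-abomination $\mathbb{X}_n$ is $(n+1)$-colorable.
   Context: $\mathbb{N}=\{0,1,2,\dots\}$. Fix an integer $n\ge 2$ and put $N=2^{n+1}-1$. Let $T_n$ be the set of triples $\langle k_1,k_2,k_3\rangle$ of pairwise distinct natural numbers $\le N$, with a fixed enumeration $T_n=\{s_0,\dots,s_t\}$. Let $U_n$ be a set of pairwise distinct elements $a_m,b_m$ ($m\in\mathbb{N}$) and $c_{m,k},d_{m,k},e^a_{m,k},e^b_{m,k}$ ($m\in\mathbb{N}$, $0\le k\le N$). Define $x\prec y$ on $U_n$ iff one of: (1) $x=a_m$ and $y\in\{c_{m,k_1},c_{m,k_2}\}$, where $s_j=\langle k_1,k_2,k_3\rangle$ with $j\equiv m \bmod (t+1)$; (2) $x=b_m$ and $y\in\{c_{m,k_1},c_{m,k_3}\}$, with $s_j$ as in (1); (3) $m\ge1$, $x=c_{m,k}$, and either $y=e^a_{m-1,j}$ with $j\ne k$, or $y=e^b_{m-1,i}$ for any $i\le N$; (4) $x=d_{m,k}$ and $y=c_{m,j}$ with $j\neq k$; (5) $x=e^a_{m,k}$ and either $y=a_m$ or $y=d_{m,j}$ with $j\ne k$; (6) $x=e^b_{m,k}$ and either $y=b_m$ or $y=d_{m,j}$ with $j\ne k$. Let $\le$ be the reflexive transitive closure of $\prec$. The $n$-abomination $\mathbb{X}_n$ is the poset $U_n\cup\{\bot\}$ where $\bot$ is a new least element, with the topology in which $U$ is open iff $\bot\notin U$ or $U$ is cofinite; it is an Esakia space. An E-partition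 on an Esakia space $\mathbb{X}$ is an equivalence relation $R$ on $X$ such that (a) if $\langle x,y\rangle\in R$ and $x\le z$ then there is $w\ge y$ with $\langle z,w\rangle\in R$; (b) if $\langle x,y\rangle\notin R$ there is a clopen union of $R$-classes containing $x$ but not $y$. For $p\in\mathbb{N}$, $\mathbb{C}_p=\{0,1\}^p$ ordered componentwise. A weak $p$-coloring of $\mathbb{X}$ is an order-preserving map $f\colon X\to\{0,1\}^p$ with $f^{-1}(\vec c)$ clopen for all $\vec c$; it is a $p$-coloring if every E-partition on $\mathbb{X}$ other than the identity relates two elements of distinct color. $\mathbb{X}$ is $p$-colorable if it admits a $p$-coloring. *)

From mathcomp Require Import all_boot all_algebra.
From Stdlib Require Import Relations List.

Set Implicit Arguments.
Unset Strict Implicit.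
Unset Printing Implicit Defensive.

(* Indices k with 0 <= k <= N = 2^(n+1) - 1, i.e. k : 'I_(2^(n+1)). *)
Definition Kidx (n : nat) := 'I_(2 ^ n.+1).

(* Triples <k1,k2,k3> are encoded as ((k1,k2),k3). *)
Definition triple (n : nat) := (Kidx n * Kidx n * Kidx n)%type.

Definition triple_distinct (n : nat) (x : triple n) : Prop :=
  [/\ x.1.1 <> x.1.2, x.1.1 <> x.2 & x.1.2 <> x.2].

Definition is_enumeration (n t : nat) (s : 'I_t.+1 -> triple n) : Prop :=
  injective s /\ (forall x : triple n, (exists j, s j = x) <-> triple_distinct x).

Inductive pt (n : nat) : Type :=
| Bot
| Aa of nat
| Bb of nat
| Cc of nat & Kidx n
| Dd of nat & Kidx n
| Ea of nat & Kidx n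
| Eb of nat & Kidx n.

Arguments Bot {n}.

(* s_j with j = m mod (t+1) *)
Definition sel (n t : nat) (s : 'I_t.+1 -> triple n) (m : nat) : triple n :=
  s (inZp m).

Definition prec (n t : nat) (s : 'I_t.+1 -> triple n) (x y : pt n) : Prop :=
  match x, y with
  | Aa m, Cc m' k => m' = m /\ (k = (sel s m).1.1 \/ k = (sel s m).1.2)
  | Bb m, Cc m' k => m' = m /\ (k = (sel s m).1.1 \/ k = (sel s m).2)
  | Cc m k, Ea m' j => m = m'.+1 /\ j <> k
  | Cc m k, Eb m' i => m = m'.+1
  | Dd m k, Cc m' j => m' = m /\ j <> k
  | Ea m k, Aa m' => m' = m
  | Ea m k, Dd m' j => m' = m /\ j <> k
  | Eb m k, Bb m' => m' = m
  | Eb m k, Dd m' j => m' = m /\ j <> k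
  | _, _ => False
  end.

Definition le_ab (n t : nat) (s : 'I_t.+1 -> triple n) (x y : pt n) : Prop :=
  x = Bot \/ clos_refl_trans (pt n) (prec s) x y.

Definition cofinite (n : nat) (U : pt n -> Prop) : Prop :=
  exists l : list (pt n), forall x, ~ U x -> List.In x l.

Definition open_ab (n : nat) (U : pt n -> Prop) : Prop :=
  ~ U Bot \/ cofinite U.

Definition clopen_ab (n : nat) (U : pt n -> Prop) : Prop :=
  open_ab U /\ open_ab (fun x => ~ U x).

Definition is_equivalence (X : Type) (R : X -> X -> Prop) : Prop :=
  [/\ forall x, R x x, forall x y, R x y -> R y x
    & forall x y z, R x y -> R y z -> R x z].

Definition E_partition (n t : nat) (s : 'I_t.+1 -> triple n)
    (R : pt n -> pt n -> Prop) : Prop :=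
  [/\ is_equivalence R,
      (forall x y z, R x y -> le_ab s x z ->
         exists w, le_ab s y w /\ R z w)
    & (forall x y, ~ R x y ->
         exists U : pt n -> Prop,
           [/\ clopen_ab U,
               (forall u v, R u v -> U u -> U v),
               U x & ~ U y])].

Definition weak_coloring (n t : nat) (s : 'I_t.+1 -> triple n) (p : nat)
    (f : pt n -> {ffun 'I_p -> bool}) : Prop :=
  (forall x y, le_ab s x y -> forall i, f x i ==> f y i) /\
  (forall c : {ffun 'I_p -> bool}, clopen_ab (fun x => f x = c)).

Definition coloring (n t : nat) (s : 'I_t.+1 -> triple n) (p : nat)
    (f : pt n -> {ffun 'I_p -> bool}) : Prop :=
  weak_coloring s f /\
  (forall R, E_partition s R -> (exists x y, R x y /\ x <> y) ->
     exists x y, R x y /\ f x <> f y).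

Definition colorable (n t : nat) (s : 'I_t.+1 -> triple n) (p : nat) : Prop :=
  exists f : pt n -> {ffun 'I_p -> bool}, coloring s f.

From Pilot Require Import Defs.
From mathcomp Require Import all_boot all_algebra.
From mathcomp Require Import zify.
From Stdlib Require Import Relations Classical.
From Stdlib Require List.

Set Implicit Arguments.
Unset Strict Implicit.
Unset Printing Implicit Defensive.

(* Colour the maximal points c_{0,k} injectively by the 2^(n+1) elements of
   C_{n+1} and every other point by 0.  Only finitely many points, all of them
   maximal, get a nonzero colour, so this is a weak colouring.  Let R be an
   E-partition that never relates points of distinct colour.  By condition (a),
   if x R y and y <= z with z alone in its R-class, then x <= z.  Grade X_n by
   depth (c_{m,k} at 3m; a_m, b_m, d_{m,k} at 3m+1; e_{m,k} at 3m+2), so that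
   every cover lowers the depth by one, and show by induction on depth that
   every point is alone in its class.  The maximal points are separated by
   their colours, except the one of colour 0; but every other point lies below
   some other maximal point, which is not above it.  A point x of positive
   depth fails to cover some z one level up, while bottom and every point two
   or more levels down lie below all of that level, so x is related neither to
   bottom nor to deeper points; and distinct points of equal positive depth
   have distinct sets of upper covers. *)

Lemma In_of_mem (T : eqType) (x : T) (l : seq T) : x \in l -> List.In x l.
Proof.
elim: l => //= a l IH; rewrite in_cons => /orP [/eqP ->|/IH]; by [left|right].
Qed.

Lemma exists_notin3 (T : finType) (a b c : T) :
  3 < #|T| -> exists i : T, [/\ i <> a, i <> b & i <> c].
Proof.
move=> card_T.
have /card_gt0P [i] : 0 < #|[predC [:: a; b; c]]|.
  rewrite -(leq_add2l #|[:: a; b; c]|) cardC addn1.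
  exact: leq_ltn_trans (card_size [:: a; b; c]) card_T.
rewrite !inE => /norP [/eqP ia /norP [/eqP ib /eqP ic]].
by exists i.
Qed.

Lemma card_colors n : #|{ffun 'I_n.+1 -> bool}| = 2 ^ n.+1.
Proof. by rewrite card_ffun card_bool card_ord. Qed.

Definition color_of_index n (k : Kidx n) : {ffun 'I_n.+1 -> bool} :=
  enum_val (cast_ord (esym (card_colors n)) k).

Definition index_of_color n (c : {ffun 'I_n.+1 -> bool}) : Kidx n :=
  cast_ord (card_colors n) (enum_rank c).

Lemma index_of_colorK n : cancel (@index_of_color n) (@color_of_index n).
Proof. by move=> c; rewrite /color_of_index /index_of_color cast_ordK enum_rankK. Qed.

Lemma color_of_index_inj n : injective (@color_of_index n).
Proof. by move=> k k' /enum_val_inj /cast_ord_inj. Qed.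

Definition abom_color n (x : pt n) : {ffun 'I_n.+1 -> bool} :=
  if x is Cc 0 k then color_of_index k else [ffun=> false].

Lemma abom_color_support n (x : pt n) :
  abom_color x <> abom_color Bot ->
  List.In x (List.map (Cc 0) (enum 'I_(2 ^ n.+1))).
Proof.
case: x => [|m|m|[|m] k|m k|m k|m k] //= _.
by apply/List.in_map/In_of_mem; rewrite mem_enum.
Qed.

Lemma clopen_fibers (T : Type) n (f : pt n -> T) (l : list (pt n)) :
  (forall x, f x <> f Bot -> List.In x l) -> forall c, clopen_ab (fun x => f x = c).
Proof.
move=> support c; have [<-|cB] := classic (f Bot = c).
  by split; [right; exists l | left].
split; [by left | right; exists l => x /NNPP fx].
by apply: support; rewrite fx => /esym.
Qed.

Definition singleton_class (T : Type) (R : T -> T -> Prop) (x : T) : Prop :=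
  forall y, R x y -> y = x.

Lemma singleton_top_of_color n (R : pt n -> pt n -> Prop) :
  (forall x y, R x y -> abom_color x = abom_color y) ->
  forall k, k <> index_of_color [ffun=> false] -> singleton_class R (Cc 0 k).
Proof.
move=> R_color k k_nz y /R_color /=.
have k_colored : color_of_index k <> [ffun=> false].
  by move=> k_blank; apply/k_nz/color_of_index_inj; rewrite index_of_colorK.
case: y => [|m|m|[|m] j|m j|m j|m j] //= kj; try by case: k_colored.
by rewrite (color_of_index_inj kj).
Qed.

(* Bottom gets the junk depth 0 of the maximal points; lemmas exclude it by
   assuming [x <> Bot] or [0 < depth x]. *)
Definition depth n (x : pt n) : nat :=
  match x with
  | Bot => 0
  | Aa m | Bb m | Dd m _ => 3 * m + 1
  | Cc m _ => 3 * m
  | Ea m _ | Eb m _ => 3 * m + 2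
  end.

Section Abomination.
Variables (n t : nat) (s : 'I_t.+1 -> triple n).

Local Notation pt := (pt n).
Local Notation prec := (prec s).
Local Notation "x <=U y" := (clos_refl_trans pt prec x y) (at level 70).
Local Notation "x <=X y" := (Defs.le_ab s x y) (at level 70).

Lemma prec_depth (x y : pt) : prec x y -> depth x = (depth y).+1.
Proof.
case: x => [|m|m|m k|m k|m k|m k]; case: y => [|m'|m'|m' k'|m' k'|m' k'|m' k'] //=;
  intuition lia.
Qed.

Lemma prec_neq_Bot (x y : pt) : prec x y -> y <> Bot.
Proof. by case: x; case: y. Qed.

Lemma prec2_le (x y z : pt) : prec x y -> prec y z -> x <=U z.
Proof. by move=> xy yz; apply: rt_trans (rt_step _ _ _ _ xy) (rt_step _ _ _ _ yz). Qed.

Lemma le_eq_or_depth_lt (x y : pt) : x <=U y -> x = y \/ depth y < depth x.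
Proof.
move=> /(clos_rt_rt1n _ _ _ _); elim=> [|a b c ab _ IH]; [by left|right].
by have := prec_depth ab; case: IH => [<-|]; lia.
Qed.

Lemma cover_of_le_ab (x z : pt) : x <=X z -> depth x = (depth z).+1 -> prec x z.
Proof.
case=> [-> //|/(clos_rt_rt1n _ _ _ _) [|y z' xy /(clos_rt1n_rt _ _ _ _) yz]] dx; first lia.
by have := prec_depth xy; case: (le_eq_or_depth_lt yz) => [<-//|]; lia.
Qed.

Hypothesis n_gt0 : 0 < n.
Hypothesis sel_distinct : forall m, triple_distinct (sel s m).

Local Notation K1 m := (sel s m).1.1.
Local Notation K2 m := (sel s m).1.2.
Local Notation K3 m := (sel s m).2.

Lemma exists_index_neq3 (a b c : Kidx n) : exists i : Kidx n, [/\ i <> a, i <> b & i <> c].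
Proof.
apply: exists_notin3; rewrite card_ord.
by rewrite (@leq_exp2l 2 2 n.+1).
Qed.

Lemma exists_prec (x : pt) : 0 < depth x -> exists y, prec x y.
Proof.
case: x => [|m|m|[|m] k|m k|m k|m k] //= pos.
- by exists (Cc m (K1 m)); split=> //; left.
- by exists (Cc m (K1 m)); split=> //; left.
- by exists (Eb m k).
- by have [j [jk _ _]] := exists_index_neq3 k k k; exists (Cc m j).
- by exists (Aa n m).
- by exists (Bb n m).
Qed.

Lemma exists_prec_Cc_neq m (u : pt) (k : Kidx n) :
  depth u = 3 * m + 1 -> exists2 j, j <> k & prec u (Cc m j).
Proof.
case: u => [|m'|m'|m' k'|m' k'|m' k'|m' k'] //= du; try lia;
  have {du} <- : m' = m by lia.
- have [K12 _ _] := sel_distinct m'.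
  have [K1k|K1k] := eqVneq (K1 m') k.
    by exists (K2 m'); [rewrite -K1k => /esym | split=> //; right].
  by exists (K1 m'); [apply/eqP | split=> //; left].
- have [_ K13 _] := sel_distinct m'.
  have [K1k|K1k] := eqVneq (K1 m') k.
    by exists (K3 m'); [rewrite -K1k => /esym | split=> //; right].
  by exists (K1 m'); [apply/eqP | split=> //; left].
- have [j [jk jk' _]] := exists_index_neq3 k k' k'.
  by exists j.
Qed.

Lemma le_of_depth_add2 (u v : pt) : v <> Bot -> depth u = (depth v).+2 -> u <=U v.
Proof.
move=> vB du; case: v vB du => [|m|m|m i|m i|m k|m k] vB //= du.
- case: u du => [|m'|m'|[|m'] k'|m' k'|m' k'|m' k'] //= du; try lia.
  have {du} -> : m' = m by lia.
  have [j [jk' _ _]] := exists_index_neq3 k' k' k'.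
  by apply: (@prec2_le _ (Ea m j)).
- case: u du => [|m'|m'|[|m'] k'|m' k'|m' k'|m' k'] //= du; try lia.
  have {du} -> : m' = m by lia.
  by apply: (@prec2_le _ (Eb m k')).
- case: u du => [|m'|m'|m' k'|m' k'|m' k'|m' k'] //= du; try lia;
    have [j [jk' ji _]] := exists_index_neq3 k' i i;
    (have {du} -> : m' = m by lia);
    by apply: (@prec2_le _ (Dd m j)); split=> //; apply: nesym.
- case: u du => [|m'|m'|[|m'] k'|m' k'|m' k'|m' k'] //= du; try lia.
  have {du} -> : m' = m by lia.
  have [j [jk' ji _]] := exists_index_neq3 k' i i.
  by apply: (@prec2_le _ (Ea m j)); split=> //; apply: nesym.
- have [|j jk uj] := @exists_prec_Cc_neq m.+1 u k; first lia.
  by apply: (prec2_le uj); split=> //; apply: nesym.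
- have [|j jk uj] := @exists_prec_Cc_neq m.+1 u k; first lia.
  by apply: (prec2_le uj).
Qed.

Lemma le_of_depth_gap (u v : pt) : v <> Bot -> (depth v).+2 <= depth u -> u <=U v.
Proof.
move=> vB; move gap : (depth u - (depth v).+2) => d.
elim: d u gap => [|d IH] u gap duv; first by apply: le_of_depth_add2 => //; lia.
have [|w uw] := @exists_prec u; first lia.
have dw := prec_depth uw.
apply: rt_trans (rt_step _ _ _ _ uw) (IH w _ _); lia.
Qed.

Lemma exists_uncovered (x : pt) :
  0 < depth x -> exists z, [/\ z <> Bot, (depth z).+1 = depth x & ~ prec x z].
Proof.
case: x => [|m|m|[|m] k|m k|m k|m k] //= pos; try lia.
- have [i [iK1 iK2 _]] := exists_index_neq3 (K1 m) (K2 m) (K2 m).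
  by exists (Cc m i); split=> //=; [lia | case=> _ []].
- have [i [iK1 iK3 _]] := exists_index_neq3 (K1 m) (K3 m) (K3 m).
  by exists (Cc m i); split=> //=; [lia | case=> _ []].
- by exists (Ea m k); split=> //=; [lia | case].
- by exists (Cc m k); split=> //=; [lia | case].
- by exists (Bb n m); split=> //=; lia.
- by exists (Aa n m); split=> //=; lia.
Qed.

Lemma eq_of_same_covers (x y : pt) :
  depth x = depth y -> 0 < depth x -> (forall z, prec x z <-> prec y z) -> x = y.
Proof.
case: x => [|m|m|m k|m k|m k|m k];
  case: y => [|m'|m'|m' k'|m' k'|m' k'|m' k'] //= dxy pos same; try lia.
all: have {dxy} ? : m' = m by lia.
all: subst m'; have [K12 K13 K23] := sel_distinct m.
- by [].
- by move/(_ (Cc m (K2 m))): same => /=; intuition congruence.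
- have [i [ik' iK1 iK2]] := exists_index_neq3 k' (K1 m) (K2 m).
  by move/(_ (Cc m i)): same => /=; intuition congruence.
- by move/(_ (Cc m (K2 m))): same => /=; intuition congruence.
- by [].
- have [i [ik' iK1 iK3]] := exists_index_neq3 k' (K1 m) (K3 m).
  by move/(_ (Cc m i)): same => /=; intuition congruence.
- case: m {K12 K13 K23} pos same => [|m] // _ same.
  have [-> //|/eqP kk'] := eqVneq k k'.
  by move/(_ (Ea m k')): same => /=; intuition congruence.
- have [i [ik iK1 iK2]] := exists_index_neq3 k (K1 m) (K2 m).
  by move/(_ (Cc m i)): same => /=; intuition congruence.
- have [i [ik iK1 iK3]] := exists_index_neq3 k (K1 m) (K3 m).
  by move/(_ (Cc m i)): same => /=; intuition congruence.
- have [-> //|/eqP kk'] := eqVneq k k'.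
  by move/(_ (Cc m k')): same => /=; intuition congruence.
- have [-> //|/eqP kk'] := eqVneq k k'.
  by move/(_ (Dd m k')): same => /=; intuition congruence.
- by move/(_ (Aa n m)): same => /=; intuition congruence.
- by move/(_ (Aa n m)): same => /=; intuition congruence.
- have [-> //|/eqP kk'] := eqVneq k k'.
  by move/(_ (Dd m k')): same => /=; intuition congruence.
Qed.

Lemma exists_le_top_neq (k : Kidx n) (y : pt) :
  y <> Cc 0 k -> exists2 j, j <> k & y <=X Cc 0 j.
Proof.
move=> yk; have [j [jk _ _]] := exists_index_neq3 k k k.
have [->|yB] := classic (y = Bot); first by exists j; [|left].
case: (ltngtP (depth y) 1) => dy.
- case: y yk yB dy => [|m|m|[|m] j'|m j'|m j'|m j'] //= yk _ dy; try lia.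
  by exists j'; [move=> j'k; apply: yk; rewrite j'k | right; apply: rt_refl].
- by exists j; last by right; apply: le_of_depth_gap => //=; lia.
- have [j' j'k yj'] := @exists_prec_Cc_neq 0 y k dy.
  by exists j'; last by right; apply: rt_step.
Qed.

Lemma abom_color_weak_coloring : weak_coloring s (@abom_color n).
Proof.
split; last exact: clopen_fibers (@abom_color_support n).
move=> x y [-> i|/le_eq_or_depth_lt [-> i|]]; first by rewrite ffunE.
  exact: implybb.
by case: x => [|m|m|[|m] k|m k|m k|m k] //= dyx i; rewrite ?ffunE //; lia.
Qed.

Section Rigidity.

Variable R : pt -> pt -> Prop.
Hypothesis R_sym : forall x y, R x y -> R y x.
Hypothesis R_up : forall x y z, R x y -> x <=X z -> exists w, y <=X w /\ R z w.
Variable k0 : Kidx n.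
Hypothesis singleton_top_neq : forall k, k <> k0 -> singleton_class R (Cc 0 k).

Lemma le_singleton_class (x y z : pt) :
  R x y -> x <=X z -> singleton_class R z -> y <=X z.
Proof. by move=> Rxy xz Rz; have [w [yw /Rz <-]] := R_up Rxy xz. Qed.

Lemma singleton_top (k : Kidx n) : singleton_class R (Cc 0 k).
Proof.
have [->|/singleton_top_neq //] := classic (k = k0).
move=> y R0y; apply: NNPP => yk0.
have [j jk0 yj] := exists_le_top_neq yk0.
case: (le_singleton_class (R_sym R0y) yj (singleton_top_neq jk0)) => [//|].
by case/le_eq_or_depth_lt => [[/esym]|].
Qed.

Lemma singleton_step (x : pt) :
  0 < depth x ->
  (forall z, z <> Bot -> depth z < depth x -> singleton_class R z) ->
  singleton_class R x.
Proof.
move=> pos IH y Rxy; apply: NNPP => yx.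
have not_far : ~ (y = Bot \/ depth x < depth y).
  move=> y_far; have [z [zB dz xz]] := exists_uncovered pos.
  apply: xz; apply: cover_of_le_ab; last lia.
  apply: le_singleton_class (R_sym Rxy) _ (IH z zB _); last lia.
  by case: y_far => [->|dxy]; [left | right; apply: le_of_depth_gap => //; lia].
have cover_transfer (u v z : pt) :
  R u v -> depth u = depth x -> depth v = depth x -> prec u z -> prec v z.
  move=> Ruv du dv uz; have dz := prec_depth uz.
  have Rz : singleton_class R z by apply: IH; [exact: prec_neq_Bot uz | lia].
  apply: cover_of_le_ab; last lia.
  exact: le_singleton_class Ruv (or_intror (rt_step _ _ _ _ uz)) Rz.
case: (ltngtP (depth y) (depth x)) => dyx.
- by apply/yx/esym/(IH y _ dyx _ (R_sym Rxy)) => yB; apply: not_far; left.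
- by apply: not_far; right.
- apply/yx/esym/eq_of_same_covers => // z.
  by split; apply: cover_transfer => //; apply: R_sym.
Qed.

Lemma singleton_of_neq_Bot (x : pt) : x <> Bot -> singleton_class R x.
Proof.
move dx : (depth x) => d; elim/ltn_ind: d x dx => d IH x dx xB.
case: (posnP d) => [d0|pos].
  case: x xB dx => [|m|m|[|m] k|m k|m k|m k] xB //= dx; try lia.
  exact: singleton_top.
apply: singleton_step => [|z zB dz]; first lia.
by apply: (IH (depth z)) => //; rewrite -dx.
Qed.

Lemma eq_of_related (x y : pt) : R x y -> x = y.
Proof.
move=> Rxy; have [xB|/singleton_of_neq_Bot/(_ y Rxy)//] := classic (x = Bot).
have [yB|/singleton_of_neq_Bot/(_ x (R_sym Rxy))//] := classic (y = Bot).
by rewrite xB yB.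
Qed.

End Rigidity.

End Abomination.

Theorem mainTheorem6 (n t : nat) (s : 'I_t.+1 -> triple n) :
  2 <= n -> is_enumeration s -> colorable s n.+1.
Proof.
move=> n_ge2 [_ enum_s].
have sel_distinct m : triple_distinct (sel s m) by apply/enum_s; exists (inZp m).
exists (@abom_color n); split; first exact: abom_color_weak_coloring.
move=> R [[_ R_sym _] R_up _] [x [y [Rxy xy]]].
apply: NNPP => same_color.
have R_color u v : R u v -> abom_color u = abom_color v.
  by move=> Ruv; apply: NNPP => uv; apply: same_color; exists u, v.
apply/xy/(eq_of_related (ltnW n_ge2) sel_distinct R_sym R_up _ Rxy) => k.
exact: singleton_top_of_color.
Qed.
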